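(* Let $d\ge 2$, $m\ge1$, and for each $u\in\mathbb{R}$, $\mu\in\{1,\ldots,m\}$ let $M_\mu^u\in\mathbb{C}^{d\times d}$ with $\sum_{\mu}(M_\mu^u)^\dagger M_\mu^u=\mathrm{I}$, each $u\mapsto M_\mu^u$ of class $C^2$, and $M_\mu^0=\sum_{n=1}^d c_{\mu,n}|n\rangle\langle n|$ in a fixed orthonormal basis $\{|n\rangle\}$ of $\mathbb{C}^d$. Let $R$ be the $d\times d$ matrix $$R_{n_1,n_2}=\sum_{\mu=1}^m\Big(2\Big|\langle n_1|\tfrac{d (M_\mu^u)^\dagger}{du}\big|_{u=0}|n_2\rangle\Big|^2+2\delta_{n_1,n_2}\,\mathrm{Re}\Big(c_{\mu,n_1}\langle n_1|\tfrac{d^2 (M_\mu^u)^\dagger}{du^2}\big|_{u=0}|n_2\rangle\Big)\Big),$$ and assume the directed graph $G$ of $R$ is strongly connected, i.e., for any $n\neq n'$ in $\{1,\ldots,d\}$ there exist distinct $n_1=n,n_2,\ldots,n_r=n'$ with $R_{n_j,n_{j+1}}\neq0$ for $j=1,\ldots,r-1$. Fix $\bar n\in\{1,\ldots,d\}$. Then there exist $d-1$ strictly positive reals $e_n$, $n\in\{1,\ldots,d\}\setminus\{\bar n\}$, such that: (i) for any reals $\lambda_n$, $n\neq\bar n$, there exists a unique vector $\sigma\in\mathbb{R}^d$ with $\sigma_{\bar n}=0$ and $R\sigma=\lambda$, where $\lambda\in\mathbb{R}^d$ has components $\lambda_n$ for $n\neq\bar n$ and $\lambda_{\bar n}=-\sum_{n\neq\bar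 n}e_n\lambda_n$; if moreover $\lambda_n<0$ for all $n\neq\bar n$, then $\sigma_n>0$ for all $n\neq\bar n$; (ii) for any $\sigma\in\mathbb{R}^d$ with $R\sigma=\lambda\in\mathbb{R}^d$, the function $V_0(\rho)=\sum_{n=1}^d\sigma_n\langle n|\rho|n\rangle$ satisfies $$\frac{d^2}{du^2}V_0\big(\mathbb{K}^u(|n\rangle\langle n|)\big)\Big|_{u=0}=\lambda_n\quad\text{for all } n\in\{1,\ldots,d\},$$ where $\mathbb{K}^u(\rho)=\sum_{\mu=1}^m M_\mu^u\rho (M_\mu^u)^\dagger$.
   Context: $\dagger$ denotes conjugate transpose; $\delta$ is the Kronecker delta. The directed graph of $R$ has vertices $1,\ldots,d$ and an edge $n_1\to n_2$ for each $n_1\neq n_2$ with $R_{n_1,n_2}>0$. *)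

From HB Require Import structures.
From mathcomp Require Import all_boot all_order all_algebra.
From mathcomp Require Import all_classical all_reals all_analysis.
From mathcomp Require Import complex.
Set Implicit Arguments. Unset Strict Implicit. Unset Printing Implicit Defensive.
Import Order.TTheory GRing.Theory Num.Theory.
Import numFieldNormedType.Exports.
Local Open Scope ring_scope.
Local Open Scope complex_scope.

Section Defs.
Variable R : realType.

Definition cRe (f : R -> R[i]) : R -> R := fun u => complex.Re (f u).
Definition cIm (f : R -> R[i]) : R -> R := fun u => complex.Im (f u).

Definition cder (f : R -> R[i]) : R -> R[i] :=
  fun u => (derive1 (cRe f) u +i* derive1 (cIm f) u).

Definition C2_real (g : R -> R) : Prop :=
  (forall x, derivable g x 1) /\ (forall x, derivable (derive1 g) x 1) /\
  continuous (derive1 (derive1 g) : R -> R).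

Definition C2_cplx (f : R -> R[i]) : Prop := C2_real (cRe f) /\ C2_real (cIm f).

Definition C2_mx d (F : R -> 'M[R[i]]_d) : Prop :=
  forall i j, C2_cplx (fun u => F u i j).

Definition mxder d (F : R -> 'M[R[i]]_d) : R -> 'M[R[i]]_d :=
  fun u => \matrix_(i, j) cder (fun v => F v i j) u.

Definition adj d (A : 'M[R[i]]_d) : 'M[R[i]]_d := \matrix_(i, j) (A j i)^*.

Definition sqnorm (z : R[i]) : R := complex.Re z ^+ 2 + complex.Im z ^+ 2.

Definition Kmap d m (M : 'I_m -> R -> 'M[R[i]]_d) (u : R) (rho : 'M[R[i]]_d)
  : 'M[R[i]]_d := \sum_(mu < m) (M mu u *m rho *m adj (M mu u)).

Definition proj_basis d (n : 'I_d) : 'M[R[i]]_d := delta_mx n n.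

Definition V0 d (sigma : 'cV[R]_d) (rho : 'M[R[i]]_d) : R[i] :=
  \sum_(n < d) (sigma n 0)%:C * rho n n.

Definition Rmat d m (M : 'I_m -> R -> 'M[R[i]]_d) (c : 'I_m -> 'I_d -> R[i])
  : 'M[R]_d :=
  \matrix_(n1, n2) \sum_(mu < m)
     (2 * sqnorm (mxder (fun u => adj (M mu u)) 0 n1 n2)
      + 2 * (n1 == n2)%:R *
          complex.Re (c mu n1 * mxder (mxder (fun u => adj (M mu u))) 0 n1 n2)).

Definition strongly_connected d (A : 'M[R]_d) : Prop :=
  forall n n' : 'I_d, n != n' ->
    exists s : seq 'I_d,
      [/\ path (fun x y => A x y != 0) n s, last n s = n' & uniq (n :: s)].

End Defs.
Arguments proj_basis {R d}.

From HB Require Import structures.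
From mathcomp Require Import all_boot all_order all_algebra.
From mathcomp Require Import all_classical all_reals all_analysis.
From mathcomp Require Import complex.
From mathcomp Require Import ring.
Import Order.TTheory GRing.Theory Num.Theory.
Import numFieldNormedType.Exports.
Local Open Scope ring_scope.
Local Open Scope complex_scope.

(* Since <j|M_mu^0|k> = delta_{jk} c_{mu,k}, the second derivative at 0 of
   |<j|M_mu^u|k>|^2 is exactly the mu-summand of R_{kj}.  Trace preservation
   makes the column sums sum_j sum_mu |<j|M_mu^u|k>|^2 identically 1, so R has
   zero row sums; its off-diagonal entries are nonnegative, i.e. R generates a
   continuous-time Markov chain, irreducible by strong connectivity.  Part (ii)
   is the same computation: V_0(K^u(|n><n|)) = sum_k sigma_k sum_mu
   |<k|M_mu^u|n>|^2.  For part (i), a discrete maximum principle shows that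
   R sigma = 0 off nbar and sigma_nbar = 0 force sigma = 0, so the system pinned
   at nbar is uniquely solvable, and that R sigma < 0 off nbar forces sigma > 0
   off nbar.  The e_n are the entries of the stationary vector pi R = 0
   normalised by pi_nbar = 1, positive by irreducibility; pi R sigma = 0 then
   yields the equation of row nbar. *)

Set Implicit Arguments. Unset Strict Implicit. Unset Printing Implicit Defensive.

Section SecondDerivative.
Variable R : realFieldType.
Implicit Types (f g : R -> R) (k x : R).

Definition derivable_everywhere f := forall x, derivable f x 1.

Definition twice_derivable f :=
  derivable_everywhere f /\ derivable_everywhere (derive1 f).

Definition derive2 f := derive1 (derive1 f).

Lemma derivable_everywhere_cst k : derivable_everywhere (fun _ => k).
Proof. by move=> x; exact: derivable_cst. Qed.

Lemma derivable_everywhereD f g : derivable_everywhere f ->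
  derivable_everywhere g -> derivable_everywhere (fun u => f u + g u).
Proof. by move=> df dg x; exact: derivableD. Qed.

Lemma derivable_everywhereM f g : derivable_everywhere f ->
  derivable_everywhere g -> derivable_everywhere (fun u => f u * g u).
Proof. by move=> df dg x; exact: derivableM. Qed.

Lemma derive1_funcst k : derive1 (fun _ : R => k) = fun _ => 0.
Proof. by apply/funext => x; exact: derive1_cst. Qed.

Lemma derive1_funD f g : derivable_everywhere f -> derivable_everywhere g ->
  derive1 (fun u => f u + g u) = fun u => derive1 f u + derive1 g u.
Proof. by move=> df dg; apply/funext => x; rewrite !derive1E; exact: deriveD. Qed.

Lemma derive1_funM f g : derivable_everywhere f -> derivable_everywhere g ->
  derive1 (fun u => f u * g u) = fun u => f u * derive1 g u + g u * derive1 f u.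
Proof. by move=> df dg; apply/funext => x; rewrite !derive1E; exact: deriveM. Qed.

Lemma derive1_funN f : derivable_everywhere f ->
  derive1 (fun u => - f u) = fun u => - derive1 f u.
Proof. by move=> df; apply/funext => x; rewrite !derive1E; exact: deriveN. Qed.

Lemma derivable_everywhere_sum n (h : 'I_n -> R -> R) :
  (forall i, derivable_everywhere (h i)) ->
  derivable_everywhere (fun u => \sum_(i < n) h i u).
Proof.
move=> dh x; have -> : (fun u => \sum_(i < n) h i u) = \sum_(i < n) h i.
  by rewrite fct_sumE.
by apply: derivable_sum => i; exact: dh.
Qed.

Lemma derive1_fun_sum n (h : 'I_n -> R -> R) :
  (forall i, derivable_everywhere (h i)) ->
  derive1 (fun u => \sum_(i < n) h i u) = fun u => \sum_(i < n) derive1 (h i) u.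
Proof.
move=> dh; apply/funext => x.
have -> : (fun u => \sum_(i < n) h i u) = \sum_(i < n) h i by rewrite fct_sumE.
rewrite derive1E derive_sum => [|i]; last exact: dh.
by apply: eq_bigr => i _; rewrite derive1E.
Qed.

Lemma twice_derivable_cst k : twice_derivable (fun _ => k).
Proof.
by split; [|rewrite derive1_funcst]; exact: derivable_everywhere_cst.
Qed.

Lemma twice_derivableD f g : twice_derivable f -> twice_derivable g ->
  twice_derivable (fun u => f u + g u).
Proof.
move=> [df ddf] [dg ddg]; split; first exact: derivable_everywhereD.
rewrite (derive1_funD df dg); exact: derivable_everywhereD.
Qed.

Lemma twice_derivableM f g : twice_derivable f -> twice_derivable g ->
  twice_derivable (fun u => f u * g u).
Proof.
move=> [df ddf] [dg ddg]; split; first exact: derivable_everywhereM.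
rewrite (derive1_funM df dg).
by apply: derivable_everywhereD; apply: derivable_everywhereM.
Qed.

Lemma twice_derivable_sum n (h : 'I_n -> R -> R) :
  (forall i, twice_derivable (h i)) ->
  twice_derivable (fun u => \sum_(i < n) h i u).
Proof.
move=> dh; split; first by apply: derivable_everywhere_sum => i; case: (dh i).
rewrite derive1_fun_sum => [|i]; last by case: (dh i).
by apply: derivable_everywhere_sum => i; case: (dh i).
Qed.

Lemma derive2_cst k x : derive2 (fun _ => k) x = 0.
Proof. by rewrite /derive2 !derive1_funcst. Qed.

Lemma derive2D f g x : twice_derivable f -> twice_derivable g ->
  derive2 (fun u => f u + g u) x = derive2 f x + derive2 g x.
Proof. by move=> [df ddf] [dg ddg]; rewrite /derive2 !derive1_funD. Qed.

Lemma derive2M f g x : twice_derivable f -> twice_derivable g ->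
  derive2 (fun u => f u * g u) x =
  f x * derive2 g x + 2 * (derive1 f x * derive1 g x) + g x * derive2 f x.
Proof.
move=> [df ddf] [dg ddg].
rewrite /derive2 (derive1_funM df dg).
rewrite (derive1_funD (derivable_everywhereM df ddg) (derivable_everywhereM dg ddf)).
rewrite (derive1_funM df ddg) (derive1_funM dg ddf).
(* [ring] does not terminate on the goal itself, whose carrier is reached
   through the normed-module structure of [R]; normalise over [R] instead. *)
have expand (a b a1 b1 a2 b2 : R) :
  a * b2 + b1 * a1 + (b * a2 + a1 * b1) = a * b2 + 2 * (a1 * b1) + b * a2.
  by ring.
exact: expand.
Qed.

Lemma derive2Ml k f x : twice_derivable f ->
  derive2 (fun u => k * f u) x = k * derive2 f x.
Proof.
move=> df; rewrite (derive2M _ (twice_derivable_cst k) df) derive2_cst.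
by rewrite derive1_funcst mul0r !mulr0 !addr0.
Qed.

Lemma derive2_sum n (h : 'I_n -> R -> R) x :
  (forall i, twice_derivable (h i)) ->
  derive2 (fun u => \sum_(i < n) h i u) x = \sum_(i < n) derive2 (h i) x.
Proof.
move=> dh; rewrite /derive2 derive1_fun_sum => [|i]; last by case: (dh i).
by rewrite derive1_fun_sum // => i; case: (dh i).
Qed.

End SecondDerivative.

Section ComplexCurves.
Variable R : realType.
Implicit Types (f : R -> R[i]) (g : R -> R) (z w : R[i]).

(* A bare [z^*] may parse as [Num.conj z]; [%C] selects [conjc], the
   conjugation used by [adj]. *)

Lemma mulcJ_sqnorm z : z * z^*%C = (sqnorm z)%:C.
Proof.
case: z => a b; apply/eqP; rewrite eq_complex /sqnorm /=.
by apply/andP; split; apply/eqP; ring.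
Qed.

Lemma sqnormJ z : sqnorm z^*%C = sqnorm z.
Proof. by case: z => a b; rewrite /sqnorm /= sqrrN. Qed.

Lemma ReMJ z w : complex.Re (z * w^*%C) = complex.Re (z^*%C * w).
Proof. by case: z w => a b [c e] /=; ring. Qed.

Lemma C2_real_twice_derivable g : C2_real g -> twice_derivable g.
Proof. by move=> [dg [ddg _]]; split=> x; [exact: dg | exact: ddg]. Qed.

Lemma cder_real g : cder (fun u => (g u)%:C) = fun u => (derive1 g u)%:C.
Proof.
by apply/funext => u; rewrite /cder /cIm /= derive1_funcst.
Qed.

Lemma cIm_cder f : cIm (cder f) = derive1 (cIm f).
Proof. by []. Qed.

Lemma cder_conj f : derivable_everywhere (cIm f) ->
  cder (fun u => (f u)^*%C) = fun u => (cder f u)^*%C.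
Proof.
move=> dIm; apply/funext => u; rewrite /cder.
have -> : cRe (fun v => (f v)^*%C) = cRe f.
  by apply/funext => v; rewrite /cRe; case: (f v).
have -> : cIm (fun v => (f v)^*%C) = fun v => - cIm f v.
  by apply/funext => v; rewrite /cIm; case: (f v).
by rewrite derive1_funN.
Qed.

Lemma sqnorm_funE f :
  (fun u => sqnorm (f u)) = fun u => cRe f u * cRe f u + cIm f u * cIm f u.
Proof. by apply/funext => u; rewrite /sqnorm !expr2. Qed.

Lemma twice_derivable_sqnorm f : C2_cplx f ->
  twice_derivable (fun u => sqnorm (f u)).
Proof.
case=> /C2_real_twice_derivable dRe /C2_real_twice_derivable dIm.
by rewrite sqnorm_funE; apply: twice_derivableD; apply: twice_derivableM.
Qed.

Lemma derive2_sqnorm f x : C2_cplx f ->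
  derive2 (fun u => sqnorm (f u)) x =
  2 * sqnorm (cder f x) + 2 * complex.Re ((f x)^*%C * cder (cder f) x).
Proof.
case=> /C2_real_twice_derivable dRe /C2_real_twice_derivable dIm.
rewrite sqnorm_funE.
rewrite (derive2D _ (twice_derivableM dRe dRe) (twice_derivableM dIm dIm)).
rewrite (derive2M _ dRe dRe) (derive2M _ dIm dIm) /sqnorm.
rewrite /cder /cRe /cIm; case: (f x) => a b /=.
have expand (a1 b1 a2 b2 : R) :
  a * a2 + 2 * (a1 * a1) + a * a2 + (b * b2 + 2 * (b1 * b1) + b * b2) =
  2 * (a1 ^+ 2 + b1 ^+ 2) + 2 * (a * a2 - - b * b2).
  by ring.
exact: expand.
Qed.

End ComplexCurves.

Section KrausDerivatives.
Variables (R : realType) (d m : nat).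
Variables (M : 'I_m -> R -> 'M[R[i]]_d) (c : 'I_m -> 'I_d -> R[i]).

Lemma Rmat_offdiag_ge0 i j : i != j -> 0 <= Rmat M c i j.
Proof.
move=> ij; rewrite mxE; apply: sumr_ge0 => mu _.
rewrite (negbTE ij) mulr0 mul0r addr0 mulr_ge0 //.
by rewrite /sqnorm addr_ge0 // sqr_ge0.
Qed.

Hypothesis M_C2 : forall mu, C2_mx (M mu).
Hypothesis M0_diag : forall mu, M mu 0 = diag_mx (\row_n c mu n).

Lemma Rmat_entry k j :
  Rmat M c k j = \sum_(mu < m) derive2 (fun u => sqnorm (M mu u j k)) 0.
Proof.
rewrite mxE; apply: eq_bigr => mu _.
have [_ dIm] := M_C2 mu j k.
set f := fun u => M mu u j k.
have dM v : mxder (fun u => adj (M mu u)) v k j = (cder f v)^*%C.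
  rewrite mxE; have -> : (fun w => adj (M mu w) k j) = fun w => (f w)^*%C.
    by apply/funext => w; rewrite mxE.
  by rewrite (cder_conj (C2_real_twice_derivable dIm).1).
have dIm' : derivable_everywhere (cIm (cder f)).
  by rewrite cIm_cder; exact: (C2_real_twice_derivable dIm).2.
have ddM : mxder (mxder (fun u => adj (M mu u))) 0 k j = (cder (cder f) 0)^*%C.
  by rewrite mxE (funext dM) (cder_conj dIm').
rewrite dM ddM derive2_sqnorm ?sqnormJ; last exact: M_C2.
rewrite /f M0_diag !mxE; case: (eqVneq j k) => [->|jk].
  by rewrite !mulr1n mulr1 ReMJ.
by rewrite !mulr0n mulr0 mul0r raddf0 mul0r mulr0.
Qed.

Lemma derive2_V0_Kmap (sigma : 'cV[R]_d) n :
  cder (cder (fun u => V0 sigma (Kmap M u (proj_basis n)))) 0 =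
  ((Rmat M c *m sigma) n 0)%:C.
Proof.
pose g u := \sum_(k < d) sigma k 0 * \sum_(mu < m) sqnorm (M mu u k n).
have -> : (fun u => V0 sigma (Kmap M u (proj_basis n))) = fun u => (g u)%:C.
  apply/funext => u; rewrite rmorph_sum; apply: eq_bigr => k _.
  rewrite rmorphM rmorph_sum /Kmap summxE; congr (_ * _); apply: eq_bigr => mu _.
  rewrite /proj_basis -(mul_delta_mx (0 : 'I_1)) mulmxA -colE -mulmxA -rowE.
  by rewrite mxE big_ord1 !mxE mulcJ_sqnorm.
rewrite !cder_real mxE -/(derive2 g 0); congr (_%:C).
have dg k : twice_derivable (fun u => \sum_(mu < m) sqnorm (M mu u k n)).
  by apply: twice_derivable_sum => mu; exact: twice_derivable_sqnorm (M_C2 mu k n).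
rewrite /g derive2_sum => [|k]; last first.
  by apply: twice_derivableM; [exact: twice_derivable_cst | exact: dg].
apply: eq_bigr => k _; rewrite derive2Ml // derive2_sum => [|mu].
  by rewrite Rmat_entry mulrC.
exact: twice_derivable_sqnorm (M_C2 mu k n).
Qed.

Hypothesis M_trace_preserving :
  forall u, \sum_(mu < m) (adj (M mu u) *m M mu u) = 1%:M.

Lemma column_sqnorm_sum u k : \sum_(j < d) \sum_(mu < m) sqnorm (M mu u j k) = 1.
Proof.
apply: (@complexI R); rewrite rmorph1 rmorph_sum.
under eq_bigr do rewrite rmorph_sum.
rewrite exchange_big /=.
have := congr1 (fun A : 'M[R[i]]_d => A k k) (M_trace_preserving u).
rewrite summxE mxE eqxx mulr1n => <-; apply: eq_bigr => mu _.
rewrite mxE; apply: eq_bigr => j _.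
by rewrite mxE mulrC mulcJ_sqnorm.
Qed.

Lemma Rmat_rowsum0 k : \sum_(j < d) Rmat M c k j = 0.
Proof.
have dcol j : twice_derivable (fun u => \sum_(mu < m) sqnorm (M mu u j k)).
  by apply: twice_derivable_sum => mu; exact: twice_derivable_sqnorm (M_C2 mu j k).
transitivity (derive2 (fun u => \sum_(j < d) \sum_(mu < m) sqnorm (M mu u j k)) 0).
  rewrite derive2_sum //; apply: eq_bigr => j _.
  rewrite Rmat_entry derive2_sum // => mu.
  exact: twice_derivable_sqnorm (M_C2 mu j k).
rewrite (_ : (fun u => _) = fun _ => 1) ?derive2_cst //.
by apply/funext => u; exact: column_sqnorm_sum.
Qed.

End KrausDerivatives.

Lemma pinned_system_solvable (F : fieldType) (d : nat) (B : 'M[F]_d) (nbar : 'I_d) :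
  (forall s : 'cV_d, s nbar 0 = 0 -> (forall n, n != nbar -> (B *m s) n 0 = 0) ->
     s = 0) ->
  forall (a : F) (r : 'cV_d), exists s : 'cV_d,
    s nbar 0 = a /\ forall n, n != nbar -> (B *m s) n 0 = r n 0.
Proof.
move=> ker0 a r.
pose P : 'M[F]_d := \matrix_(i, j) if i == nbar then (j == nbar)%:R else B i j.
have PE (s : 'cV_d) i : (P *m s) i 0 = if i == nbar then s nbar 0 else (B *m s) i 0.
  rewrite mxE; case: (eqVneq i nbar) => [->|ni].
    rewrite (bigD1 nbar) //= mxE !eqxx mul1r big1 ?addr0 // => j nj.
    by rewrite mxE eqxx (negbTE nj) mul0r.
  by rewrite mxE; apply: eq_bigr => j _; rewrite mxE (negbTE ni).
have P_unit : P \in unitmx.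
  rewrite -unitmx_tr -row_free_unit; apply/inj_row_free => v vP.
  have Pv0 : P *m v^T = 0 by rewrite -[P *m _]trmxK trmx_mul trmxK vP trmx0.
  apply: trmx_inj; rewrite trmx0; apply: ker0 => [|n nbar_n].
    by have := PE v^T nbar; rewrite eqxx Pv0 mxE.
  by have := PE v^T n; rewrite (negbTE nbar_n) Pv0 mxE.
pose rhs : 'cV_d := \col_i if i == nbar then a else r i 0.
pose sol := invmx P *m rhs.
have Psol : P *m sol = rhs := mulKVmx P_unit rhs.
exists sol; split; first by have := PE sol nbar; rewrite eqxx Psol mxE eqxx => <-.
move=> n nbar_n; have := PE sol n.
by rewrite (negbTE nbar_n) Psol mxE (negbTE nbar_n) => <-.
Qed.

Section MetzlerMatrix.
Variables (R : realFieldType) (d : nat) (A : 'M[R]_d).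
Hypothesis A_offdiag_ge0 : forall i j, i != j -> 0 <= A i j.
Hypothesis A_rowsum0 : forall i, \sum_j A i j = 0.
Hypothesis A_connected : forall n n', connect [rel x y | A x y != 0] n n'.

Lemma backward_closed_everywhere (P : pred 'I_d) :
  (forall x y, x != y -> A x y != 0 -> P y -> P x) -> forall n n', P n' -> P n.
Proof.
move=> P_back n n'; have /connectP [s path_s ->] := A_connected n n'.
elim: s n path_s => [//|y s IHs] n /= /andP [Any path_s] Plast.
have Py := IHs y path_s Plast.
by case: (eqVneq n y) => [-> // | ny]; exact: P_back ny Any Py.
Qed.

Lemma mulmx_rowsum0 (s : 'cV[R]_d) x :
  (A *m s) x 0 = \sum_j A x j * (s j 0 - s x 0).
Proof.
rewrite mxE; under [RHS]eq_bigr do rewrite mulrBr.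
by rewrite sumrB -big_distrl /= A_rowsum0 mul0r subr0.
Qed.

Lemma mulmx_at_argmax (s : 'cV[R]_d) x : (forall j, s j 0 <= s x 0) ->
  (A *m s) x 0 <= 0 /\
  ((A *m s) x 0 = 0 -> forall y, A x y != 0 -> s y 0 = s x 0).
Proof.
move=> s_max; rewrite mulmx_rowsum0.
have term_le0 j : A x j * (s j 0 - s x 0) <= 0.
  case: (eqVneq x j) => [->|xj]; first by rewrite subrr mulr0.
  by rewrite mulr_ge0_le0 ?A_offdiag_ge0 // subr_le0.
split=> [|sum0 y Axy]; first exact: sumr_le0.
have sumN0 : \sum_j - (A x j * (s j 0 - s x 0)) = 0.
  by rewrite sumrN sum0 oppr0.
have term_ge0 j : xpredT j -> 0 <= - (A x j * (s j 0 - s x 0)).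
  by rewrite oppr_ge0.
have /eqP := @psumr_eq0P _ _ xpredT _ term_ge0 sumN0 y isT.
by rewrite oppr_eq0 mulf_eq0 (negbTE Axy) subr_eq0 => /eqP.
Qed.

Lemma maximum_principle (nbar : 'I_d) (s : 'cV[R]_d) :
  (forall n, n != nbar -> 0 <= (A *m s) n 0) -> forall n, s n 0 <= s nbar 0.
Proof.
move=> As_ge0; have [x _ s_max] := @arg_maxP _ _ 'I_d nbar xpredT (fun j => s j 0) isT.
suff -> : s nbar 0 = s x 0 by move=> n; exact: s_max.
pose P y := (s y 0 == s x 0) ==> (s nbar 0 == s x 0).
have P_back y z : y != z -> A y z != 0 -> P z -> P y.
  move=> yz Ayz /implyP Pz; apply/implyP => /eqP sy.
  have [<-|y_nbar] := eqVneq y nbar; first by rewrite sy.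
  have y_max j : s j 0 <= s y 0 by rewrite sy; exact: s_max.
  have [Asy_le0 Asy0_max] := mulmx_at_argmax y_max.
  have Asy0 : (A *m s) y 0 = 0 by apply/eqP; rewrite eq_le Asy_le0 As_ge0.
  by apply: Pz; rewrite (Asy0_max Asy0 z Ayz) sy.
have := @backward_closed_everywhere P P_back x nbar.
by rewrite /P eqxx implybb => /(_ isT) /implyP /(_ isT) /eqP.
Qed.

Lemma pinned_kernel_eq0 (nbar : 'I_d) (s : 'cV[R]_d) : s nbar 0 = 0 ->
  (forall n, n != nbar -> (A *m s) n 0 = 0) -> s = 0.
Proof.
move=> s_nbar As0.
have s_le : forall n, s n 0 <= s nbar 0.
  by apply: maximum_principle => n nbar_n; rewrite As0.
have s_ge : forall n, (- s) n 0 <= (- s) nbar 0.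
  by apply: maximum_principle => n nbar_n; rewrite mulmxN mxE As0 ?oppr0.
apply/colP => i; apply/eqP; rewrite mxE eq_le -s_nbar s_le /=.
by have := s_ge i; rewrite !mxE s_nbar oppr0 oppr_le0.
Qed.

Lemma pinned_solution_gt0 (nbar : 'I_d) (s : 'cV[R]_d) : s nbar 0 = 0 ->
  (forall n, n != nbar -> (A *m s) n 0 < 0) -> forall n, n != nbar -> 0 < s n 0.
Proof.
move=> s_nbar As_lt0.
have AsN_gt0 n : n != nbar -> 0 < (A *m - s) n 0.
  by move=> nbar_n; rewrite mulmxN mxE oppr_gt0 As_lt0.
have s_ge0 n : 0 <= s n 0.
  have := @maximum_principle nbar (- s) (fun m nm => ltW (AsN_gt0 m nm)) n.
  by rewrite !mxE s_nbar oppr0 oppr_le0.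
move=> n nbar_n; rewrite lt_def s_ge0 andbT; apply/eqP => sn0.
have n_max j : (- s) j 0 <= (- s) n 0 by rewrite !mxE sn0 oppr0 oppr_le0.
have [AsN_le0 _] := mulmx_at_argmax n_max.
by have := AsN_gt0 n nbar_n; rewrite ltNge AsN_le0.
Qed.

Lemma left_kernel_colsum (x : 'rV[R]_d) k : x *m A = 0 ->
  \sum_l x 0 l * A l k = 0.
Proof. by move/(congr1 (fun B : 'rV[R]_d => B 0 k)); rewrite !mxE. Qed.

(* Pairing x with the total inflow into S = [x < 0] gives a sum of
   nonnegative terms that vanishes, so no edge leaves S. *)
Lemma left_kernel_no_exit (x : 'rV[R]_d) : x *m A = 0 ->
  forall i j, x 0 i < 0 -> 0 <= x 0 j -> A i j = 0.
Proof.
move=> xA i j xi_lt0 xj_ge0; pose S := [pred k | x 0 k < 0].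
have outflow l : \sum_(k | S k) A l k = - \sum_(k | ~~ S k) A l k.
  by have := A_rowsum0 l; rewrite (bigID S) /= => /eqP; rewrite addr_eq0 => /eqP.
have term_ge0 l : xpredT l -> 0 <= x 0 l * \sum_(k | S k) A l k.
  move=> _; have [xl_lt0|xl_ge0] := ltrP (x 0 l) 0.
    apply: mulr_le0; first exact: ltW.
    rewrite outflow oppr_le0; apply: sumr_ge0 => k k_notS.
    by apply: A_offdiag_ge0; apply: contraNneq k_notS => <-.
  apply: mulr_ge0 => //; apply: sumr_ge0 => k kS; apply: A_offdiag_ge0.
  by apply: contraTneq kS => <-; rewrite inE -leNgt.
have sum0 : \sum_l x 0 l * \sum_(k | S k) A l k = 0.
  under eq_bigr do rewrite big_distrr.
  by rewrite exchange_big big1 // => k _; exact: left_kernel_colsum.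
have /eqP := @psumr_eq0P _ _ xpredT _ term_ge0 sum0 i isT.
rewrite mulf_eq0 (negbTE (ltr0_neq0 xi_lt0)) /= outflow oppr_eq0 => /eqP out0.
have Ai_ge0 k : ~~ S k -> 0 <= A i k.
  by move=> k_notS; apply: A_offdiag_ge0; apply: contraNneq k_notS => <-.
by apply: (psumr_eq0P Ai_ge0 out0); rewrite inE -leNgt.
Qed.

Lemma left_kernel_ge0 (x : 'rV[R]_d) n0 : x *m A = 0 -> 0 <= x 0 n0 ->
  forall i, 0 <= x 0 i.
Proof.
move=> xA x_n0 i; rewrite leNgt; apply/negP => xi_lt0.
pose P y := (x 0 y < 0) ==> (x 0 n0 < 0).
have P_back y z : y != z -> A y z != 0 -> P z -> P y.
  move=> _ Ayz /implyP Pz; apply/implyP => xy_lt0.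
  have [/Pz //|xz_ge0] := ltrP (x 0 z) 0.
  by move: Ayz; rewrite (left_kernel_no_exit xA xy_lt0 xz_ge0) eqxx.
have := @backward_closed_everywhere P P_back i n0.
by rewrite /P implybb xi_lt0 ltNge x_n0 => /(_ isT).
Qed.

Lemma left_kernel_gt0 (x : 'rV[R]_d) n0 : x *m A = 0 -> 0 < x 0 n0 ->
  forall i, 0 < x 0 i.
Proof.
move=> xA x_n0; have x_ge0 := left_kernel_ge0 xA (ltW x_n0).
pose P y := x 0 y == 0.
have P_back y z : y != z -> A y z != 0 -> P z -> P y.
  move=> _ Ayz /eqP xz0.
  have term_ge0 l : xpredT l -> 0 <= x 0 l * A l z.
    move=> _; have [->|lz] := eqVneq l z; first by rewrite xz0 mul0r.
    by rewrite mulr_ge0 ?A_offdiag_ge0.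
  have /eqP := @psumr_eq0P _ _ xpredT _ term_ge0 (left_kernel_colsum z xA) y isT.
  by rewrite mulf_eq0 (negbTE Ayz) orbF.
move=> i; rewrite lt_def x_ge0 andbT; apply/negP => /eqP xi0.
have := @backward_closed_everywhere P P_back n0 i.
by rewrite /P xi0 eqxx (gt_eqF x_n0) => /(_ isT).
Qed.

Lemma left_kernel_eq0 (x : 'rV[R]_d) n0 : x *m A = 0 -> x 0 n0 = 0 -> x = 0.
Proof.
move=> xA x_n0; have NxA : - x *m A = 0 by rewrite mulNmx xA oppr0.
have x_ge0 : forall i, 0 <= x 0 i.
  by apply: (left_kernel_ge0 xA (n0 := n0)); rewrite x_n0.
have Nx_ge0 : forall i, 0 <= (- x) 0 i.
  by apply: (left_kernel_ge0 NxA (n0 := n0)); rewrite mxE x_n0 oppr0.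
apply/rowP => i; apply/eqP; rewrite mxE eq_le x_ge0 andbT.
by have := Nx_ge0 i; rewrite mxE oppr_ge0.
Qed.

Lemma left_kernel_of_pinned (nbar : 'I_d) (x : 'rV[R]_d) :
  (forall k, k != nbar -> (x *m A) 0 k = 0) -> x *m A = 0.
Proof.
move=> xA0; apply/rowP => k; rewrite [RHS]mxE.
have [-> {k}|/xA0 //] := eqVneq k nbar.
have total : \sum_k (x *m A) 0 k = 0.
  under eq_bigr do rewrite mxE.
  rewrite exchange_big big1 // => l _.
  by rewrite -big_distrr /= A_rowsum0 mulr0.
have rest0 : \sum_(k | k != nbar) (x *m A) 0 k = 0 by apply: big1 => k /xA0.
by move: total; rewrite (bigD1 nbar) //= rest0 addr0.
Qed.

Lemma exists_left_kernel (nbar : 'I_d) :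
  exists pi : 'rV[R]_d, pi *m A = 0 /\ pi 0 nbar = 1.
Proof.
have trE (s : 'cV[R]_d) : s^T *m A = (A^T *m s)^T by rewrite trmx_mul trmxK.
have ker0 (s : 'cV[R]_d) : s nbar 0 = 0 ->
    (forall n, n != nbar -> (A^T *m s) n 0 = 0) -> s = 0.
  move=> s_nbar ATs0; apply: trmx_inj; rewrite trmx0.
  apply: (left_kernel_eq0 (n0 := nbar)); last by rewrite mxE.
  by apply: (left_kernel_of_pinned (nbar := nbar)) => k nk; rewrite trE mxE ATs0.
have [y [y_nbar ATy0]] := pinned_system_solvable ker0 1 0.
exists y^T; split; last by rewrite mxE.
apply: (left_kernel_of_pinned (nbar := nbar)) => k nk.
by rewrite trE mxE ATy0 // mxE.
Qed.

Lemma left_kernel_balance (nbar : 'I_d) (pi : 'rV[R]_d) (s : 'cV[R]_d) :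
  pi *m A = 0 -> pi 0 nbar = 1 ->
  (A *m s) nbar 0 = - \sum_(k < d | k != nbar) pi 0 k * (A *m s) k 0.
Proof.
move=> piA pi_nbar; apply/eqP; rewrite -addr_eq0.
have : (pi *m (A *m s)) 0 0 = 0 by rewrite mulmxA piA mul0mx mxE.
by rewrite mxE (bigD1 nbar) //= pi_nbar mul1r => ->.
Qed.

End MetzlerMatrix.

Lemma strongly_connected_connect (R : realType) d (A : 'M[R]_d) :
  strongly_connected A -> forall n n', connect [rel x y | A x y != 0] n n'.
Proof.
move=> A_sc n n'; have [<-|nn'] := eqVneq n n'; first exact: connect0.
by have [s [path_s last_s _]] := A_sc n n' nn'; apply/connectP; exists s.
Qed.

Theorem lemma2 (R : realType) (d m : nat) (hd : (2 <= d)%N) (hm : (1 <= m)%N)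
  (M : 'I_m -> R -> 'M[R[i]]_d) (c : 'I_m -> 'I_d -> R[i])
  (hTP : forall u : R, \sum_(mu < m) (adj (M mu u) *m M mu u) = 1%:M)
  (hC2 : forall mu, C2_mx (M mu))
  (h0 : forall mu, M mu 0 = diag_mx (\row_n c mu n))
  (hG : strongly_connected (Rmat M c))
  (nbar : 'I_d) :
  exists e : 'I_d -> R,
    (forall n, n != nbar -> 0 < e n) /\
    (forall lam : 'I_d -> R,
       let lamv : 'cV[R]_d :=
         \col_n (if n == nbar then - \sum_(k < d | k != nbar) e k * lam k
                 else lam n) in
       exists sigma : 'cV[R]_d,
         (sigma nbar 0 = 0 /\ Rmat M c *m sigma = lamv) /\
         (forall sigma' : 'cV[R]_d,
            sigma' nbar 0 = 0 /\ Rmat M c *m sigma' = lamv -> sigma' = sigma) /\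
         ((forall n, n != nbar -> lam n < 0) ->
            forall n, n != nbar -> 0 < sigma n 0)) /\
    (forall sigma lam : 'cV[R]_d, Rmat M c *m sigma = lam ->
       forall n : 'I_d,
         cder (cder (fun u => V0 sigma (Kmap M u (proj_basis n)))) 0
           = (lam n 0)%:C).
Proof.
set A := Rmat M c.
have A_offdiag_ge0 : forall i j, i != j -> 0 <= A i j := @Rmat_offdiag_ge0 R d m M c.
have A_rowsum0 := Rmat_rowsum0 hC2 h0 hTP.
have A_connected := strongly_connected_connect hG.
have [pi [piA pi_nbar]] := exists_left_kernel A_offdiag_ge0 A_rowsum0 A_connected nbar.
have pi_gt0 := left_kernel_gt0 A_offdiag_ge0 A_rowsum0 A_connected piA (n0 := nbar).
exists (fun k => pi 0 k); split; first by move=> n _; rewrite pi_gt0 // pi_nbar ltr01.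
split; last by move=> sigma lam <- n; exact: derive2_V0_Kmap.
move=> lam lamv.
have ker0 := pinned_kernel_eq0 A_offdiag_ge0 A_rowsum0 A_connected (nbar := nbar).
have [sigma [sigma_nbar A_sigma]] := pinned_system_solvable ker0 0 (\col_n lam n).
have A_sigma_lamv : A *m sigma = lamv.
  apply/colP => n; rewrite /lamv [RHS]mxE; have [->|nbar_n] := eqVneq n nbar.
    rewrite (left_kernel_balance _ piA pi_nbar); congr (- _).
    by apply: eq_bigr => k nk; rewrite A_sigma // mxE.
  by rewrite A_sigma // mxE.
exists sigma; split=> //; split.
  move=> sigma' [sigma'_nbar A_sigma']; apply/eqP; rewrite -subr_eq0; apply/eqP.
  apply: ker0 => [|n _]; first by rewrite !mxE sigma'_nbar sigma_nbar subrr.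
  by rewrite mulmxBr A_sigma' A_sigma_lamv subrr mxE.
move=> lam_lt0; apply: (pinned_solution_gt0 A_offdiag_ge0 A_rowsum0 A_connected sigma_nbar).
by move=> n nbar_n; rewrite A_sigma // mxE lam_lt0.
Qed.
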